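(* If $n > 1$ and $n \ne 5$, then there is some $n \times n$ panstochastic matrix that is not a convex combination of panstochastic permutation matrices.
   Context: An $n \times n$ matrix with nonnegative real entries is doubly stochastic if the sum of the entries along any of its rows or columns is equal to $1$. A doubly stochastic matrix is panstochastic if the sum of the entries along any downward diagonal or upward diagonal, either broken or unbroken, is equal to $1$ (indexing rows and columns by $\{0,1,\dots,n-1\}$, the $k$th upward diagonal consists of the entries $(i,j)$ with $i+j \equiv k \pmod n$, and the $k$th downward diagonal of the entries $(i,j)$ with $i-j \equiv k \pmod n$). A linear combination is convex if the coefficients are nonnegative and sum to $1$. *)

From mathcomp Require Import all_boot all_order all_fingroup all_algebra.
From mathcomp Require Import reals.
Set Implicit Arguments. Unset Strict Implicit. Unset Printing Implicit Defensive.
Import Order.TTheory GRing.Theory Num.Theory.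
Local Open Scope ring_scope.

Definition doubly_stochastic (R : realType) (n : nat) (A : 'M[R]_n) : Prop :=
  (forall i j, 0 <= A i j) /\
  (forall i : 'I_n, \sum_(j < n) A i j = 1) /\
  (forall j : 'I_n, \sum_(i < n) A i j = 1).

(* k-th upward diagonal: entries (i,j) with i + j = k (mod n);
   k-th downward diagonal: entries (i,j) with i - j = k (mod n),
   i.e. i = j + k (mod n). *)
Definition panstochastic (R : realType) (n : nat) (A : 'M[R]_n) : Prop :=
  doubly_stochastic A /\
  (forall k : 'I_n,
      \sum_(i < n) \sum_(j < n | (i + j == k %[mod n])%N) A i j = 1) /\
  (forall k : 'I_n,
      \sum_(i < n) \sum_(j < n | (i == j + k %[mod n])%N) A i j = 1).

Definition convex_comb_panstoch_perm (R : realType) (n : nat) (A : 'M[R]_n)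
  : Prop :=
  exists c : 'S_n -> R,
    (forall s, 0 <= c s) /\
    (\sum_(s : 'S_n) c s = 1) /\
    (forall s, c s != 0 -> panstochastic (perm_mx s : 'M[R]_n)) /\
    A = \sum_(s : 'S_n) c s *: (perm_mx s : 'M[R]_n).

From mathcomp Require Import all_boot all_order all_fingroup all_algebra.
From mathcomp Require Import reals.
From mathcomp Require Import ring zify.
Set Implicit Arguments. Unset Strict Implicit. Unset Printing Implicit Defensive.
Import Order.TTheory GRing.Theory Num.Theory.
Local Open Scope ring_scope.

(* Index rows and columns by Z/nZ, so that rows, columns and the two families
   of broken diagonals are the lines a x + b y = k of the torus for
   (a, b) = (1, 0), (0, 1), (1, 1), (1, -1).  If s is a permutation with a
   panstochastic matrix, then x |-> s x, x + s x and x - s x are bijections of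
   Z/nZ.  Summing x and x^2 along them gives n | n(n-1)/2 and
   n | n(n-1)(2n-1)/3, i.e. gcd(n, 6) = 1; so for gcd(n, 6) > 1 the uniform
   matrix J/n is a counterexample.  For gcd(n, 6) = 1, w = 1/(n-1), take the
   matrix with w on row 0 off the diagonal, and on row x <> 0 the weight w at
   columns 0, x, -x and 1 - 3w at column 2x.  It is panstochastic, and a
   panstochastic permutation s in its support with s 0 = 1 satisfies s x = 2x
   except at three points X, Y, Z with s X = 0, s Y = Y, s Z = -Z.  Comparing
   the power sums of degree 1, 2, 3 along the three bijections with those of
   x |-> 2x, 3x, -x yields polynomial relations in X, Y, Z from which
   5 = 0 in Z/nZ follows, hence n = 5. *)

Lemma sum_ord_mul2 n : ((\sum_(i < n) i) * 2 = n * n.-1)%N.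
Proof.
elim: n => [|n IH]; first by rewrite big_ord0.
by rewrite big_ord_recr /= mulnDl IH; case: n {IH} => //=; lia.
Qed.

Lemma sum_ord_sq_mul6 n : ((\sum_(i < n) i ^ 2) * 6 = n.-1 * n * (2 * n).-1)%N.
Proof.
elim: n => [|n IH]; first by rewrite big_ord0.
by rewrite big_ord_recr /= mulnDl IH; case: n {IH} => //=; nia.
Qed.

Lemma coprime6_dvdn_power_sums n : (0 < n)%N ->
  (n %| \sum_(i < n) i)%N -> (n %| 2 * \sum_(i < n) i ^ 2)%N -> coprime n 6.
Proof.
move=> n_gt0 /dvdnP[q1 sum1] /dvdnP[q2 sum2].
rewrite (coprimeMr n 2 3) !(coprime_sym n) !prime_coprime //; apply/andP; split.
  have := sum_ord_mul2 n; rewrite sum1 mulnAC [X in X = _]mulnC.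
  by move/eqP; rewrite eqn_pmul2l //; lia.
have := sum_ord_sq_mul6 n.
rewrite (_ : 6 = 2 * 3)%N // mulnCA mulnA sum2 mulnAC [X in X = _]mulnC.
rewrite [(n.-1 * n)%N]mulnC -mulnA => /eqP; rewrite eqn_pmul2l // => /eqP q2E.
have : (3 %| n.-1 * (2 * n).-1)%N by rewrite -q2E dvdn_mull.
by rewrite Euclid_dvdM //; lia.
Qed.

Lemma card_preim1_inj (T : finType) (f : T -> T) :
  (forall y, #|[pred x | f x == y]| = 1%N) -> injective f.
Proof.
move=> fiber1 x y fxy; have /eqP := fiber1 (f x).
rewrite eqn_leq => /andP[/card_le1_eqP fiber_eq _].
by apply: fiber_eq; rewrite inE ?fxy.
Qed.

Lemma convex_comb_panstoch_perm_support (R : realType) n (A : 'M[R]_n) i0 j0 :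
  convex_comb_panstoch_perm A -> 0 < A i0 j0 ->
  exists s : 'S_n,
    [/\ panstochastic (perm_mx s : 'M[R]_n), s i0 = j0 & forall i, 0 < A i (s i)].
Proof.
move=> [c [c_ge0 [_ [c_pan ->]]]].
have entryE i j :
    (\sum_(s : 'S_n) c s *: perm_mx s : 'M[R]_n) i j = \sum_(s : 'S_n | s i == j) c s.
  rewrite summxE [RHS]big_mkcond; apply: eq_bigr => s _.
  by rewrite !mxE mulr_natr mulrb.
rewrite entryE lt0r => /andP[/eqP/psumr_neq0P[// | s /andP[/eqP si0 cs_gt0]] _].
exists s; split=> // [|i]; first exact/c_pan/lt0r_neq0.
by rewrite entryE (bigD1 s) //= ltr_wpDr ?sumr_ge0.
Qed.

Lemma eq0_lin_comb (K : comPzRingType) (e1 e2 e3 c1 c2 c3 p : K) :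
  e1 = 0 -> e2 = 0 -> e3 = 0 -> p = c1 * e1 + c2 * e2 + c3 * e3 -> p = 0.
Proof. by move=> -> -> -> ->; rewrite !mulr0 !addr0. Qed.
Arguments eq0_lin_comb {K e1 e2 e3} c1 c2 c3 {p}.

Lemma five_eq0 (K : comUnitRingType) (X Y Z : K) :
  (2 : K) \is a GRing.unit -> (3 : K) \is a GRing.unit ->
  1 - 2 * X - Y - 3 * Z = 0 ->
  1 - 4 * X ^+ 2 - 3 * Y ^+ 2 - 3 * Z ^+ 2 = 0 ->
  1 - Y ^+ 2 + 3 * Z ^+ 2 = 0 ->
  1 - 8 * X ^+ 3 - 7 * Y ^+ 3 - 9 * Z ^+ 3 = 0 ->
  1 - 26 * X ^+ 3 - 19 * Y ^+ 3 - 27 * Z ^+ 3 = 0 ->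
  -1 + 2 * X ^+ 3 + Y ^+ 3 + 9 * Z ^+ 3 = 0 ->
  5 = 0 :> K.
Proof.
move=> u2 u3 p1 p2 q2 p3 r3 q3.
have u6 : (6 : K) \is a GRing.unit by rewrite (_ : 6 = 2 * 3) ?unitrM ?u2 //; ring.
have unit_cancel (u a : K) : u \is a GRing.unit -> u * a = 0 -> a = 0.
  by move=> u_unit ua0; apply: (mulrI u_unit); rewrite ua0 mulr0.
have z0 : (0 : K) = 0 by [].
have Y_def : Y = 1 - 2 * X - 3 * Z.
  by apply/eqP; rewrite -subr_eq0; apply/eqP/(eq0_lin_comb (-1) 0 0 p1 z0 z0); ring.
have Z3 : 6 * Z ^+ 3 - 1 = 0.
  by apply: (unit_cancel _ _ u6); apply: (eq0_lin_comb (-2) 1 5 p3 r3 q3); ring.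
have X3 : 2 * X ^+ 3 + 1 = 0.
  by apply: (unit_cancel _ _ u6); apply: (eq0_lin_comb 8 (-3) (-1) p3 r3 q3); ring.
have XZ2 : 2 * X ^+ 2 + 6 * Z ^+ 2 + 1 = 0.
  by apply: (unit_cancel _ _ u2); apply: (eq0_lin_comb (-1) 3 0 p2 q2 z0); ring.
have XZ1 : 1 + 3 * Z ^+ 2 + 2 * X + 3 * Z - 6 * X * Z = 0.
  apply: (unit_cancel _ _ u2); apply: (eq0_lin_comb 1 2 0 q2 XZ2 z0).
  by rewrite Y_def; ring.
have XZ3 : X + 6 * X * Z ^+ 2 - 1 = 0.
  by apply: (eq0_lin_comb X (-1) 0 XZ2 X3 z0); ring.
have Z2 : 3 * Z ^+ 2 + 2 = 0.
  apply: (unit_cancel _ _ u3).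
  apply: (eq0_lin_comb (1 + 6 * Z ^+ 2) (- 2 * (1 - 3 * Z)) (- (3 + 3 * Z)) XZ1 XZ3 Z3).
  by ring.
have Z1 : 4 * Z + 1 = 0 by apply: (eq0_lin_comb (2 * Z) (-1) 0 Z2 Z3 z0); ring.
have X1 : 3 * X + 1 = 0 by apply: (eq0_lin_comb (-1) (2 * X) 0 XZ3 Z2 z0); ring.
have n35 : (35 : K) = 0.
  by apply: (eq0_lin_comb 16 (- 3 * (4 * Z + 1) + 6) 0 Z2 Z1 z0); ring.
have n25 : (25 : K) = 0.
  apply: (eq0_lin_comb 27 (- 2 * ((3 * X + 1) ^+ 2 - 3 * (3 * X + 1) + 3)) 0 X3 X1 z0).
  by ring.
by apply: (eq0_lin_comb 3 (-4) 0 n35 n25 z0); ring.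
Qed.

Section Torus.
Variables (R : realType) (m : nat).
(* For n = m.+2 the type 'Z_n is convertible to 'I_n, so matrix indices carry
   the ring structure of Z/nZ. *)
Local Notation n := m.+2.
Implicit Types (a b c k u x y : 'Z_n) (A B : 'M[R]_n) (s : 'S_n).

Definition line_sum A a b k : R := \sum_x \sum_(y | a * x + b * y == k) A x y.

Definition pan_dirs : seq ('Z_n * 'Z_n) := [:: (1, 0); (0, 1); (1, 1); (1, -1)].

Lemma mem_pan_dirs : [/\ (0, 1) \in pan_dirs, (1, 1) \in pan_dirs & (1, -1) \in pan_dirs].
Proof. by split; rewrite !inE eqxx !orbT. Qed.

Lemma Zp_add_eq_mod x y k : (x + y == k) = ((x + y)%N == k %[mod n]).
Proof. by rewrite -val_eqE /= (modn_small (ltn_ord k)). Qed.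

Lemma line_sum_row A k : line_sum A 1 0 k = \sum_y A k y.
Proof.
rewrite /line_sum (bigD1 k) //= [X in _ + X]big1 ?addr0 => [|x xk].
  by apply: eq_bigl => y; rewrite mul0r addr0 mul1r eqxx.
by rewrite big_pred0 // => y; rewrite mul0r addr0 mul1r (negbTE xk).
Qed.

Lemma line_sum_col A k : line_sum A 0 1 k = \sum_x A x k.
Proof.
apply: eq_bigr => x _; rewrite (eq_bigl (pred1 k)) ?big_pred1_eq // => y.
by rewrite mul0r add0r mul1r.
Qed.

Lemma line_sum_diag A k :
  line_sum A 1 1 k = \sum_(i < n) \sum_(j < n | (i + j == k %[mod n])%N) A i j.
Proof. by apply: eq_bigr => x _; apply: eq_bigl => y; rewrite !mul1r Zp_add_eq_mod. Qed.

Lemma line_sum_anti A k :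
  line_sum A 1 (-1) k = \sum_(i < n) \sum_(j < n | (i == j + k %[mod n])%N) A i j.
Proof.
apply: eq_bigr => x _; apply: eq_bigl => y.
by rewrite mul1r mulN1r subr_eq addrC eq_sym Zp_add_eq_mod eq_sym.
Qed.

Lemma panstochasticE A : panstochastic A <->
  (forall x y, 0 <= A x y) /\ forall a b k, (a, b) \in pan_dirs -> line_sum A a b k = 1.
Proof.
split=> [[[A_ge0 [Arow Acol]] [Adiag Aanti]] | [A_ge0 Aline]].
  split=> // a b k; rewrite !inE => /or4P[] /eqP[-> ->].
  - by rewrite line_sum_row.
  - by rewrite line_sum_col.
  - by rewrite line_sum_diag.
  - by rewrite line_sum_anti.
have [d01 d11 d1N1] := mem_pan_dirs.
do ![split] => // k.
- by rewrite -line_sum_row Aline // inE eqxx.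
- by rewrite -line_sum_col Aline.
- by rewrite -line_sum_diag Aline.
- by rewrite -line_sum_anti Aline.
Qed.

Lemma line_sumD A B a b k : line_sum (A + B) a b k = line_sum A a b k + line_sum B a b k.
Proof.
rewrite /line_sum -big_split; apply: eq_bigr => x _.
by rewrite -big_split; apply: eq_bigr => y _; rewrite mxE.
Qed.

Lemma line_sumZ r A a b k : line_sum (r *: A) a b k = r * line_sum A a b k.
Proof.
rewrite /line_sum mulr_sumr; apply: eq_bigr => x _.
by rewrite mulr_sumr; apply: eq_bigr => y _; rewrite mxE.
Qed.

Lemma line_sum_tr A a b k : line_sum A^T a b k = line_sum A b a k.
Proof.
rewrite /line_sum (eq_bigr _ (fun x _ => big_mkcond _ _)) exchange_big /=.
apply: eq_bigr => y _; rewrite [RHS]big_mkcond; apply: eq_bigr => x _.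
by rewrite addrC mxE.
Qed.

Lemma line_sum_unit A a b k :
  b \is a GRing.unit -> line_sum A a b k = \sum_x A x (b^-1 * (k - a * x)).
Proof.
move=> b_unit; apply: eq_bigr => x _.
rewrite (eq_bigl (pred1 (b^-1 * (k - a * x)))) ?big_pred1_eq // => y.
by rewrite addrC (can2_eq (addrK _) (subrK _)) (can2_eq (mulKr b_unit) (mulVKr b_unit)).
Qed.

Lemma panstochastic_const_mx : panstochastic (const_mx n%:R^-1 : 'M[R]_n).
Proof.
apply/panstochasticE; split=> [x y|a b k]; first by rewrite mxE invr_ge0 ler0n.
have sum_const : \sum_(x : 'Z_n) (n%:R^-1 : R) = 1.
  by rewrite sumr_const card_ord -(mulr_natr n%:R^-1) mulVf // pnatr_eq0.
have uN1 : (-1 : 'Z_n) \is a GRing.unit by rewrite unitrN unitr1.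
rewrite !inE => /or4P[] /eqP[-> ->];
  rewrite ?line_sum_row ?line_sum_unit ?unitr1 // -[RHS]sum_const;
  by apply: eq_bigr => x _; rewrite mxE.
Qed.

Definition fun_mx (P : pred 'Z_n) (f : 'Z_n -> 'Z_n) : 'M[R]_n :=
  \matrix_(x, y) (P x && (f x == y))%:R.

Lemma line_sum_fun_mx P f a b k :
  line_sum (fun_mx P f) a b k = #|[pred x | P x && (a * x + b * f x == k)]|%:R.
Proof.
rewrite -sumr_const big_mkcond; apply: eq_bigr => x _ /=.
rewrite big_mkcond (bigD1 (f x)) //= big1 ?addr0 => [|y yfx]; rewrite !mxE.
  by rewrite eqxx andbT inE; case: (P x); case: ifP.
by rewrite eq_sym in yfx; rewrite (negbTE yfx) andbF; case: ifP.
Qed.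

Lemma line_sum_perm_mx s a b k :
  line_sum (perm_mx s) a b k = #|[pred x | a * x + b * s x == k]|%:R.
Proof.
have -> : perm_mx s = fun_mx predT s by apply/matrixP => x y; rewrite !mxE.
by rewrite line_sum_fun_mx.
Qed.

Lemma panstochastic_perm_mx_inj s a b : panstochastic (perm_mx s : 'M[R]_n) ->
  (a, b) \in pan_dirs -> injective (fun x => a * x + b * s x).
Proof.
case/panstochasticE=> _ line ab; apply: card_preim1_inj => k.
by apply/eqP; rewrite -(eqr_nat R) -line_sum_perm_mx line.
Qed.

Lemma panstochastic_perm_mx_sum s a b (V : nmodType) (F : 'Z_n -> V) :
  panstochastic (perm_mx s : 'M[R]_n) -> (a, b) \in pan_dirs ->
  \sum_x F (a * x + b * s x) = \sum_x F x.
Proof.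
by move=> pan ab; rewrite [RHS](reindex_inj (panstochastic_perm_mx_inj pan ab)).
Qed.

Lemma panstochastic_perm_mx_sums s (V : nmodType) (F : 'Z_n -> V) :
  panstochastic (perm_mx s : 'M[R]_n) ->
  [/\ \sum_x F (s x) = \sum_x F x, \sum_x F (x + s x) = \sum_x F x
    & \sum_x F (x - s x) = \sum_x F x].
Proof.
move=> pan; have sum_dir a b := @panstochastic_perm_mx_sum s a b V F pan.
have [d01 d11 d1N1] := mem_pan_dirs.
split.
- by rewrite -(sum_dir 0 1) //; apply: eq_bigr => x _; rewrite mul0r add0r mul1r.
- by rewrite -(sum_dir 1 1) //; apply: eq_bigr => x _; rewrite !mul1r.
- by rewrite -(sum_dir 1 (-1)) //; apply: eq_bigr => x _; rewrite mul1r mulN1r.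
Qed.

Lemma Zp_natr_eq0 d : (d%:R : 'Z_n) = 0 -> (n %| d)%N.
Proof. by move/(congr1 val); rewrite /= val_Zp_nat // => /eqP. Qed.

Lemma panstochastic_perm_mx_coprime6 s :
  panstochastic (perm_mx s : 'M[R]_n) -> coprime n 6.
Proof.
move=> pan; have sums (F : 'Z_n -> 'Z_n) := panstochastic_perm_mx_sums F pan.
have sum_id0 : \sum_(x : 'Z_n) x = 0.
  have [sum_s sum_add _] := sums id.
  apply: (addrI (\sum_x x)); rewrite addr0 -[in RHS]sum_add big_split /=.
  by rewrite sum_s.
have sum_sq0 : 2 * \sum_(x : 'Z_n) x ^+ 2 = 0.
  have [sum_s sum_add sum_sub] := sums (fun x => x ^+ 2).
  have double : \sum_x x ^+ 2 + \sum_x x ^+ 2 = 4 * \sum_(x : 'Z_n) x ^+ 2.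
    rewrite -{1}sum_add -[X in _ + X = _]sum_sub -big_split /=.
    rewrite (eq_bigr (fun x => 2 * x ^+ 2 + 2 * s x ^+ 2)) => [|x _]; last by ring.
    by rewrite big_split /= -!mulr_sumr sum_s; ring.
  apply: (addrI (2 * \sum_x x ^+ 2)); rewrite addr0.
  by transitivity (4 * \sum_(x : 'Z_n) x ^+ 2); [ring | rewrite -double; ring].
apply: coprime6_dvdn_power_sums => //; apply: Zp_natr_eq0.
  by rewrite natr_sum -[RHS]sum_id0; apply: eq_bigr => x _; rewrite natr_Zp.
rewrite natrM natr_sum -[RHS]sum_sq0; congr (_ * _).
by apply: eq_bigr => x _; rewrite natrX natr_Zp.
Qed.

Definition nz_sol u k : R := #|[pred x : 'Z_n | (x != 0) && (u * x == k)]|%:R.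

Lemma nz_sol_unit u k : u \is a GRing.unit -> nz_sol u k = (k != 0)%:R.
Proof.
move=> u_unit; rewrite /nz_sol (@eq_card _ _ [pred x | (k != 0) && (x == u^-1 * k)]).
  by case: (k != 0); [rewrite (eq_card1 (x := u^-1 * k)) | rewrite eq_card0].
move=> x; rewrite !inE (can2_eq (mulKr u_unit) (mulVKr u_unit)).
have uV_unit : u^-1 \is a GRing.unit by rewrite unitrV.
by case: (x =P u^-1 * k) => [->|]; rewrite ?andbT ?andbF // (mulrI_eq0 _ (mulrI uV_unit)).
Qed.

Lemma nz_sol0 k : nz_sol 0 k = (k == 0)%:R * m.+1%:R.
Proof.
rewrite /nz_sol (@eq_card _ _ [pred x | (k == 0) && (x != 0)]) => [|x].
  by case: (k == 0); rewrite ?card0 ?mul0r // mul1r (cardC1 (0 : 'Z_n)) card_ord.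
by rewrite !inE mul0r [0 == k]eq_sym andbC.
Qed.

Definition dil_mx c : 'M[R]_n := fun_mx (predC1 0) ( *%R c).

Lemma line_sum_dil_mx c a b k : line_sum (dil_mx c) a b k = nz_sol (a + b * c) k.
Proof.
rewrite line_sum_fun_mx; congr (_%:R); apply: eq_card => x.
by rewrite !inE mulrDl mulrA.
Qed.

Definition star_weight : R := m.+1%:R^-1.

Definition star_mx : 'M[R]_n :=
  star_weight *: ((dil_mx 0)^T + dil_mx 0 + dil_mx 1 + dil_mx (-1))
  + (1 - 3 * star_weight) *: dil_mx 2.

Lemma line_sum_star_mx a b k : line_sum star_mx a b k =
  star_weight * (nz_sol (b + a * 0) k + nz_sol (a + b * 0) k + nz_sol (a + b * 1) k
                 + nz_sol (a + b * -1) k)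
  + (1 - 3 * star_weight) * nz_sol (a + b * 2) k.
Proof. by rewrite /star_mx !(line_sumD, line_sumZ) line_sum_tr !line_sum_dil_mx. Qed.

Lemma star_mx_gt0 x y :
  0 < star_mx x y -> if x == 0 then y != 0 else y \in [:: 0; x; -x; 2 * x].
Proof.
rewrite !mxE /= !mul0r mul1r mulN1r; case: ifP => [/eqP-> | x0] /=.
  by apply: contraTneq => ->; rewrite eqxx /= !(addr0, mulr0) ltxx.
apply: contraTT; rewrite !inE !negb_or !(eq_sym y) [0 == x]eq_sym x0.
by case/and4P=> /negbTE-> /negbTE-> /negbTE-> /negbTE->; rewrite !(addr0, mulr0) ltxx.
Qed.

Lemma panstochastic_perm_mx_sum_except s c E a b (V : zmodType) (F : 'Z_n -> V) :
  panstochastic (perm_mx s : 'M[R]_n) -> (a, b) \in pan_dirs ->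
  a + b * c \is a GRing.unit -> uniq E -> (forall x, x \notin E -> s x = c * x) ->
  \sum_(x <- E) (F (a * x + b * s x) - F ((a + b * c) * x)) = 0.
Proof.
move=> pan ab u_unit E_uniq sE.
have sum_all : \sum_x (F (a * x + b * s x) - F ((a + b * c) * x)) = 0.
  rewrite sumrB (panstochastic_perm_mx_sum F pan ab).
  by rewrite [in X in X - _](reindex_inj (mulrI u_unit)) subrr.
rewrite big_uniq // -[RHS]sum_all [RHS](bigID (mem E)) /=.
rewrite [X in _ = _ + X]big1 ?addr0 // => x /sE ->.
by rewrite mulrDl mulrA subrr.
Qed.

Section Coprime6.
Hypothesis n_coprime6 : coprime n 6.

Lemma Zp_unit2 : (2 : 'Z_n) \is a GRing.unit.
Proof. by rewrite unitZpE // (coprime_dvdr _ n_coprime6). Qed.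

Lemma Zp_unit3 : (3 : 'Z_n) \is a GRing.unit.
Proof. by rewrite unitZpE // (coprime_dvdr _ n_coprime6). Qed.

Lemma pan_dirs_unit2 a b : (a, b) \in pan_dirs -> a + b * 2 \is a GRing.unit.
Proof.
rewrite !inE => /or4P[] /eqP[-> ->]; rewrite ?(mul0r, mul1r, mulN1r, addr0, add0r).
- exact: unitr1.
- exact: Zp_unit2.
- by rewrite (_ : 1 + 2 = 3) ?Zp_unit3 //; ring.
- by rewrite (_ : 1 - 2 = -1) ?unitrN ?unitr1 //; ring.
Qed.

Lemma one_sub3_star_weight_ge0 : 0 <= 1 - 3 * star_weight.
Proof.
have m_ge2 : (2 <= m)%N by move: n_coprime6; case: m => [|[|]].
by rewrite subr_ge0 ler_pdivrMr ?ltr0n // mul1r ler_nat.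
Qed.

Lemma panstochastic_star_mx : panstochastic star_mx.
Proof.
apply/panstochasticE; split=> [x y|a b k].
  have w_ge0 : 0 <= star_weight by rewrite invr_ge0 ler0n.
  by rewrite !mxE addr_ge0 ?mulr_ge0 ?one_sub3_star_weight_ge0 ?addr_ge0 ?ler0n.
have total : star_weight * ((k == 0)%:R * m.+1%:R + (k != 0)%:R + (k != 0)%:R + (k != 0)%:R)
    + (1 - 3 * star_weight) * (k != 0)%:R = 1.
  case: (k == 0); rewrite /= ?mul1r ?mul0r ?addr0 ?mulr0 ?add0r; last ring.
  by rewrite /star_weight addr0 mulVf // pnatr_eq0.
have [u2 u3] := (Zp_unit2, Zp_unit3).
have uN1 : (-1 : 'Z_n) \is a GRing.unit by rewrite unitrN unitr1.
have [e11 e12 e1N2] : [/\ 1 + 1 = 2 :> 'Z_n, 1 + 2 = 3 :> 'Z_n & 1 - 2 = -1 :> 'Z_n].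
  by split; ring.
(* In each direction exactly one of the four dilation lines is degenerate. *)
rewrite line_sum_star_mx !inE => /or4P[] /eqP[-> ->];
  rewrite !(mulr0, mul0r, mulr1, mul1r, mulrN1, mulN1r, addr0, add0r, subrr, opprK);
  rewrite ?(e11, e12, e1N2);
  by rewrite -[RHS]total nz_sol0 !nz_sol_unit ?unitr1 //; ring.
Qed.

Lemma star_perm_shape s : panstochastic (perm_mx s : 'M[R]_n) -> s 0 = 1 ->
    (forall x, 0 < star_mx x (s x)) ->
  exists X Y Z, [/\ [/\ s X = 0, s Y = Y & s Z = -Z], uniq [:: 0; X; Y; Z]
    & forall x, x \notin [:: 0; X; Y; Z] -> s x = 2 * x].
Proof.
move=> pan s0 supp; have [_ d11 d1N1] := mem_pan_dirs.
have diag_inj := panstochastic_perm_mx_inj pan d11.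
have anti_inj := panstochastic_perm_mx_inj pan d1N1.
have [diag_inv _ diagK] := injF_bij diag_inj.
have [anti_inv _ antiK] := injF_bij anti_inj.
exists ((s^-1)%g 0), (anti_inv 0), (diag_inv 0).
set X := (s^-1)%g 0; set Y := anti_inv 0; set Z := diag_inv 0.
have sX : s X = 0 by rewrite permKV.
have sY : s Y = Y by move: (antiK 0); rewrite mul1r mulN1r => /subr0_eq.
have sZ : s Z = -Z by move: (diagK 0); rewrite !mul1r addrC => /eqP; rewrite addr_eq0 => /eqP.
have one_neq0 : (1 : 'Z_n) != 0 := oner_neq0 _.
have X0 : X != 0 by apply: contra_neq one_neq0 => X0; rewrite -s0 -X0 sX.
have Y0 : Y != 0 by apply: contra_neq one_neq0 => Y0; rewrite -s0 -{1}Y0 sY.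
have Z0 : Z != 0 by apply: contra_neq one_neq0 => Z0; rewrite -s0 -{1}Z0 sZ Z0 oppr0.
have XY : X != Y by apply: contra_neq Y0 => XY; rewrite -sY -XY sX.
have XZ : X != Z by apply: contra_neq Z0 => XZ; apply/eqP; rewrite -oppr_eq0 -sZ -XZ sX.
have YZ : Y != Z.
  apply: contra_neq Y0 => YZ; apply/eqP.
  rewrite -(mulrI_eq0 _ (mulrI Zp_unit2)) mulr_natl mulr2n addr_eq0.
  by rewrite -{1}sY YZ sZ.
split=> [//||x]; first by rewrite /= !inE !negb_or ![0 == _]eq_sym X0 Y0 Z0 XY XZ YZ.
rewrite !inE !negb_or => /and4P[x0 xX xY xZ].
move/star_mx_gt0: (supp x); rewrite (negbTE x0) !inE => /or4P[] /eqP sx //.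
- by move: xX; rewrite -sX in sx; rewrite (perm_inj sx) eqxx.
- have xY' : x = Y by apply: anti_inj; rewrite /= sx sY !mul1r !mulN1r !subrr.
  by rewrite xY' eqxx in xY.
- have xZ' : x = Z by apply: diag_inj; rewrite /= sx sZ !mul1r !subrr.
  by rewrite xZ' eqxx in xZ.
Qed.

Lemma star_mx_not_convex_comb : n != 5%N -> ~ convex_comb_panstoch_perm star_mx.
Proof.
move=> n_neq5 conv.
have [|s [pan s0 supp]] := convex_comb_panstoch_perm_support (i0 := 0) (j0 := 1) conv.
  by rewrite !mxE /= !addr0 mulr0 addr0 mulr1 invr_gt0 ltr0n.
have [X [Y [Z [[sX sY sZ] E_uniq sE]]]] := star_perm_shape pan s0 supp.
have [d01 d11 d1N1] := mem_pan_dirs.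
have power_sum a b e (ab : (a, b) \in pan_dirs) :=
  panstochastic_perm_mx_sum_except (fun x => x ^+ e) pan ab (pan_dirs_unit2 ab) E_uniq sE.
have {}power_sum a b e (ab : (a, b) \in pan_dirs) :
    (b ^+ e - 0 ^+ e) + ((a * X) ^+ e - ((a + b * 2) * X) ^+ e)
    + (((a + b) * Y) ^+ e - ((a + b * 2) * Y) ^+ e)
    + (((a - b) * Z) ^+ e - ((a + b * 2) * Z) ^+ e) = 0.
  rewrite -[RHS](power_sum a b e ab) !big_cons big_nil s0 sX sY sZ.
  by rewrite !mulr0 add0r mulr1 !addr0 mulrN -mulrDl -mulrBl !addrA.
move/eqP: n_neq5; apply; apply/prime_nt_dvdP => //; apply: Zp_natr_eq0.
apply: (five_eq0 Zp_unit2 Zp_unit3 (X := X) (Y := Y) (Z := Z)).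
- by rewrite -[RHS](power_sum 0 1 1 d01); ring.
- by rewrite -[RHS](power_sum 0 1 2 d01); ring.
- by rewrite -[RHS](power_sum 1 (-1) 2 d1N1); ring.
- by rewrite -[RHS](power_sum 0 1 3 d01); ring.
- by rewrite -[RHS](power_sum 1 1 3 d11); ring.
- by rewrite -[RHS](power_sum 1 (-1) 3 d1N1); ring.
Qed.

End Coprime6.

End Torus.

Theorem theorem1p2 (R : realType) (n : nat) :
  (1 < n)%N -> n <> 5%N ->
  exists A : 'M[R]_n, panstochastic A /\ ~ convex_comb_panstoch_perm A.
Proof.
case: n => [|[|m]] // _ /eqP n_neq5.
have [n_coprime6 | n_not_coprime6] := boolP (coprime m.+2 6).
  exists (star_mx R m); split; first exact: panstochastic_star_mx.
  exact: star_mx_not_convex_comb.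
exists (const_mx m.+2%:R^-1); split=> [|conv]; first exact: panstochastic_const_mx.
have [|s [pan _ _]] := convex_comb_panstoch_perm_support (i0 := 0) (j0 := 0) conv.
  by rewrite mxE invr_gt0 ltr0n.
by rewrite (panstochastic_perm_mx_coprime6 pan) in n_not_coprime6.
Qed.
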